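(* Let $R$ be a $d\times d$ expansive integer matrix, $B\subset\mathbb{Z}^d$ finite with $0\in B$, $N:=|B|$, $L\subset\mathbb{Z}^d$ finite with $0\in L$, and $(\alpha_l)_{l\in L}$ complex numbers such that the matrix $\frac{1}{\sqrt N}\left(e^{2\pi i (R^T)^{-1}l\cdot b}\alpha_l\right)_{l\in L,b\in B}$ has orthonormal columns (equivalently, $\sum_{l\in L}|\alpha_l|^2|m_B((R^T)^{-1}(t-l))|^2=1$ for all $t\in\mathbb{R}^d$). Then for every $k\in\mathbb{N}$ the functions $$\left\{\alpha_{l_0}\cdots\alpha_{l_{k-1}}\,e_{l_0+R^Tl_1+\dots+(R^T)^{k-1}l_{k-1}} : l_0,\dots,l_{k-1}\in L\right\}$$ form a Parseval frame for $L^2(\nu_k)$, where $\nu_k=\frac{1}{N^k}\sum_{b_0,\dots,b_{k-1}\in B}\delta_{R^{-k}(b_0+Rb_1+\dots+R^{k-1}b_{k-1})}$.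
   Context: $e_\lambda(x)=e^{2\pi i\lambda\cdot x}$, $m_B(x)=\frac1N\sum_{b\in B}e^{2\pi ib\cdot x}$, $\delta_a$ is the Dirac measure at $a$. A Parseval frame $\{f_i\}$ of $H$ satisfies $\sum_i|\langle v,f_i\rangle|^2=\|v\|^2$ for all $v\in H$. A matrix is expansive if all eigenvalues have modulus $>1$. *)

From HB Require Import structures.
From mathcomp Require Import all_boot all_order all_algebra.
From mathcomp Require Import finmap.
From mathcomp Require Import all_classical all_reals all_analysis.
From mathcomp Require Import complex.
Set Implicit Arguments. Unset Strict Implicit. Unset Printing Implicit Defensive.
Import Order.TTheory GRing.Theory Num.Theory.
Local Open Scope ring_scope.
Local Open Scope complex_scope.

Definition intmx (R : realType) (m n : nat) (A : 'M[int]_(m, n)) : 'M[R]_(m, n) :=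
  map_mx (fun z : int => z%:~R) A.

Definition dotr (R : realType) (d : nat) (x y : 'cV[R]_d) : R := (x^T *m y) 0 0.

Definition expi (R : realType) (t : R) : R[i] :=
  (cos (2 * pi * t)) +i* (sin (2 * pi * t)).

Definition expansive (R : realType) (d : nat) (M : 'M[int]_d) : Prop :=
  forall z : R[i], eigenvalue (map_mx (fun w : int => (w%:~R : R)%:C) M) z -> 1 < `|z|.

Definition radix_sum (d k : nat) (A : 'M[int]_d) (v : 'I_k -> 'cV[int]_d)
  : 'cV[int]_d := \sum_(j < k) iter j (mulmx A) (v j).

Definition nu_atom (R : realType) (d k : nat) (M : 'M[int]_d) (v : 'I_k -> 'cV[int]_d)
  : 'cV[R]_d := iter k (mulmx (invmx (intmx R M))) (intmx R (radix_sum M v)).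

(* Inner product of L^2(nu_k), nu_k = N^-k sum_{b in B^k} delta_{nu_atom b}. *)
Definition nu_inner (R : realType) (d k : nat) (M : 'M[int]_d) (B : {fset 'cV[int]_d})
  (f g : 'cV[R]_d -> R[i]) : R[i] :=
  ((#|` B|%:R : R[i]) ^+ k)^-1 *
  \sum_(bs : k.-tuple B)
     f (nu_atom R M (fun j => val (tnth bs j))) *
     (g (nu_atom R M (fun j => val (tnth bs j))))^*.

Definition frame_fun (R : realType) (d k : nat) (M : 'M[int]_d) (L : {fset 'cV[int]_d})
  (alpha : L -> R[i]) (ls : k.-tuple L) : 'cV[R]_d -> R[i] :=
  fun x => (\prod_(j < k) alpha (tnth ls j)) *
           expi (dotr (intmx R (radix_sum M^T (fun j => val (tnth ls j)))) x).

From HB Require Import structures.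
From mathcomp Require Import all_boot all_order all_algebra.
From mathcomp Require Import finmap.
From mathcomp Require Import all_classical all_reals all_analysis.
From mathcomp Require Import complex.
From mathcomp Require Import ring.
Set Implicit Arguments. Unset Strict Implicit. Unset Printing Implicit Defensive.
Import Order.TTheory GRing.Theory Num.Theory.
Local Open Scope ring_scope.
Local Open Scope complex_scope.

(* Let G_k(l, b) = alpha_(l_0) ... alpha_(l_(k-1)) e(lambda(l) . x(b)) be the
   L^k x B^k matrix of the frame functions evaluated at the atoms x(b) of nu_k.
   As nu_k averages the point masses at the N^k atoms, the Parseval identity
   for f reads sum_l |sum_b f(x(b)) conj G_k(l, b)|^2 = N^k sum_b |f(x(b))|^2,
   which holds as soon as G_k has orthogonal columns of squared norm N^k.
   This follows by induction on k: splitting off the first digit of l and the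
   last digit of b exhibits G_(k+1) as G_1 (x) G_k twisted by a unimodular
   factor that depends only on (l_0, b_0 .. b_(k-2)), because the remaining
   cross term pairs two integer vectors, on which e is trivial. *)

Section OrthogonalColumns.
Variable C : numClosedFieldType.

Definition orthogonal_columns (I J : finType) (n : C) (G : I -> J -> C) : Prop :=
  forall j j', \sum_i G i j * (G i j')^* = n * (j == j')%:R.

Lemma orthogonal_columns_bij (I I' J J' : finType) (n : C) (G : I -> J -> C)
    (sigma : I' -> I) (tau : J' -> J) :
  bijective sigma -> bijective tau ->
  orthogonal_columns n (fun i j => G (sigma i) (tau j)) -> orthogonal_columns n G.
Proof.
move=> [sigma' sK K'sigma] tau_bij oG j j'.
have [tau' _ K'tau] := tau_bij.
rewrite -[j]K'tau -[j']K'tau (inj_eq (bij_inj tau_bij)) -oG.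
by rewrite (reindex sigma) //; exists sigma' => i _.
Qed.

Lemma orthogonal_columns_twisted_prod (I1 I2 J1 J2 : finType) (n1 n2 : C)
    (G1 : I1 -> J1 -> C) (G2 : I2 -> J2 -> C) (u : I1 -> J2 -> C) :
  (forall i j, u i j * (u i j)^* = 1) ->
  orthogonal_columns n1 G1 -> orthogonal_columns n2 G2 ->
  orthogonal_columns (n1 * n2) (fun i j => u i.1 j.2 * G1 i.1 j.1 * G2 i.2 j.2).
Proof.
move=> u_unit oG1 oG2 [j1 j2] [j1' j2'] /=.
rewrite -(pair_bigA _ (fun i1 i2 =>
  u i1 j2 * G1 i1 j1 * G2 i2 j2 * (u i1 j2' * G1 i1 j1' * G2 i2 j2')^*)) /= xpair_eqE.
under eq_bigr => i1 _.
  under eq_bigr => i2 _ do rewrite !rmorphM mulrACA.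
  rewrite -mulr_sumr oG2.
over.
have [<- | _] := eqVneq j2 j2'; last by rewrite big1 ?andbF ?mulr0 // => i1 _; rewrite !mulr0.
rewrite andbT mulr1 -mulr_suml.
under eq_bigr => i1 _ do rewrite mulrACA u_unit mul1r.
by rewrite oG1 mulrAC.
Qed.

Lemma parseval_of_orthogonal_columns (I J : finType) (n : C) (G : I -> J -> C) (f : J -> C) :
  orthogonal_columns n G ->
  \sum_i `|\sum_j f j * (G i j)^*| ^+ 2 = n * \sum_j f j * (f j)^*.
Proof.
move=> oG.
have cross j j' : \sum_i f j * (G i j)^* * (f j' * (G i j')^*)^*
    = f j * (f j')^* * (n * (j' == j)%:R).
  rewrite -oG mulr_sumr; apply: eq_bigr => i _.
  by rewrite rmorphM /= conjCK mulrACA [(G i j)^* * _]mulrC.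
under eq_bigr => i _ do rewrite normCK rmorph_sum mulr_suml.
under eq_bigr => i _ do under eq_bigr => j _ do rewrite mulr_sumr.
rewrite exchange_big mulr_sumr; apply: eq_bigr => j _.
rewrite exchange_big.
under eq_bigr => j' _ do rewrite cross.
rewrite (bigD1 j) //= big1 => [|j' /negbTE ->]; last by rewrite !mulr0.
by rewrite eqxx addr0 mulr1 mulrC.
Qed.
End OrthogonalColumns.

Lemma cons_tuple_bij (T : finType) (k : nat) :
  bijective (fun p : T * k.-tuple T => cons_tuple p.1 p.2).
Proof.
apply: inj_card_bij; last by rewrite card_prod !card_tuple expnS.
by move=> [x s] [y t] /(congr1 val) [-> /val_inj ->].
Qed.

Lemma rcons_tuple_bij (T : finType) (k : nat) :
  bijective (fun p : T * k.-tuple T => rcons_tuple p.2 p.1).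
Proof.
apply: inj_card_bij; last by rewrite card_prod !card_tuple expnS.
by move=> [x s] [y t] /(congr1 val) /rcons_inj [/val_inj -> ->].
Qed.

Section Expi.
Variable R : realType.

Lemma expi0 : expi (0 : R) = 1.
Proof. by rewrite /expi mulr0 cos0 sin0. Qed.

Lemma expiD (a b : R) : expi (a + b) = expi a * expi b.
Proof.
rewrite /expi mulrDr cosD sinD.
by rewrite -[(_ +i* _) * (_ +i* _)]/(_ +i* _); congr Complex; rewrite addrC.
Qed.

Lemma expiN (a : R) : expi (- a) = (expi a)^*.
Proof. by rewrite /expi mulrN cosN sinN. Qed.

Lemma expi_int (z : int) : expi (z%:~R : R) = 1.
Proof.
have expi_nat (n : nat) : expi (n%:R : R) = 1.
  have two_pi_n : 2 * pi * (n%:R : R) = 0 + (pi *+ 2) *+ n.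
    by rewrite add0r -[RHS]mulr_natr -(mulr_natr pi 2) [pi * _]mulrC.
  by rewrite /expi two_pi_n (periodicn (@cosD2pi R)) (periodicn (@sinD2pi R)) cos0 sin0.
case: z => n; first by rewrite -pmulrn expi_nat.
by rewrite NegzE mulrNz expiN -pmulrn expi_nat conjc1.
Qed.

Lemma expi_unit (a : R) : expi a * (expi a)^* = 1.
Proof. by rewrite -[X in _ * X]expiN -expiD subrr expi0. Qed.

End Expi.

Section IntegerMatrices.
Variable R : realType.

Lemma intmxD m n (u v : 'M[int]_(m, n)) : intmx R (u + v) = intmx R u + intmx R v.
Proof. exact: map_mxD. Qed.

Lemma intmxM m n p (u : 'M[int]_(m, n)) (v : 'M[int]_(n, p)) :
  intmx R (u *m v) = intmx R u *m intmx R v.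
Proof. exact: map_mxM. Qed.

Lemma intmxT m n (u : 'M[int]_(m, n)) : intmx R u^T = (intmx R u)^T.
Proof. by rewrite /intmx map_trmx. Qed.

Lemma intmx_iter d k (M : 'M[int]_d) (v : 'cV[int]_d) :
  intmx R (iter k (mulmx M) v) = iter k (mulmx (intmx R M)) (intmx R v).
Proof. by elim: k => //= k IHk; rewrite intmxM IHk. Qed.

Lemma expansive_unitmx d (M : 'M[int]_d) : expansive R M -> intmx R M \in unitmx.
Proof.
move=> expM; rewrite unitmxE unitfE /intmx (det_map_mx (intr : {rmorphism int -> R})).
rewrite intr_eq0; apply: contraPN expM => /eqP detM0.
have : \det (map_mx (fun w : int => (w%:~R : R)%:C) M) == 0.
  have -> : map_mx (fun w : int => (w%:~R : R)%:C) M = map_mx (intr : int -> R[i]) M.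
    by apply/matrixP => i j; rewrite !mxE rmorph_int.
  by rewrite (det_map_mx (intr : {rmorphism int -> R[i]})) detM0 rmorph0.
move/det0P => [v v_neq0 vM0] /(_ 0) expM0.
suff : 1 < `|0 : R[i]| by rewrite normr0 ltr10.
by apply/expM0/eigenvalueP; exists v; rewrite ?vM0 ?scale0r.
Qed.

End IntegerMatrices.

Lemma dotrDl (R : realType) d (u v w : 'cV[R]_d) : dotr (u + v) w = dotr u w + dotr v w.
Proof. by rewrite /dotr linearD mulmxDl mxE. Qed.

Lemma dotrDr (R : realType) d (u v w : 'cV[R]_d) : dotr u (v + w) = dotr u v + dotr u w.
Proof. by rewrite /dotr mulmxDr mxE. Qed.

Lemma radix_sum_cons d k (A : 'M[int]_d) (T : {fset 'cV[int]_d}) (x : T) (s : k.-tuple T) :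
  radix_sum A (fun j => val (tnth (cons_tuple x s) j))
  = val x + A *m radix_sum A (fun j => val (tnth s j)).
Proof.
rewrite /radix_sum big_ord_recl /= mulmx_sumr; congr (_ + _).
by apply: eq_bigr => j _; rewrite tnthS.
Qed.

Lemma radix_sum_rcons d k (A : 'M[int]_d) (T : {fset 'cV[int]_d}) (x : T) (s : k.-tuple T) :
  radix_sum A (fun j => val (tnth (rcons_tuple s x) j))
  = radix_sum A (fun j => val (tnth s j)) + iter k (mulmx A) (val x).
Proof.
rewrite /radix_sum big_ord_recr /= (tnth_nth x) /= nth_rcons size_tuple ltnn eqxx.
congr (_ + _); apply: eq_bigr => j _.
by rewrite (tnth_nth x) /= nth_rcons size_tuple ltn_ord -tnth_nth.
Qed.

Section FrameMatrix.
Variables (R : realType) (d : nat) (M : 'M[int]_d) (B L : {fset 'cV[int]_d}).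
Variable alpha : L -> R[i].
Hypothesis M_unit : intmx R M \in unitmx.

Local Notation Q := (invmx (intmx R M)).
Local Notation QT := (invmx (intmx R M^T)).

Definition tuple_atom k (bs : k.-tuple B) : 'cV[R]_d :=
  nu_atom R M (fun j => val (tnth bs j)).

Definition frame_matrix k (ls : k.-tuple L) (bs : k.-tuple B) : R[i] :=
  frame_fun M alpha ls (tuple_atom bs).

Definition digit_matrix (l : L) (b : B) : R[i] :=
  alpha l * expi (dotr (QT *m intmx R (val l)) (intmx R (val b))).

Lemma digit_matrix_orthogonal_columns :
  (0 < #|` B|)%N ->
  orthogonal_columns 1 (fun (l : L) (b : B) =>
    ((Num.sqrt (#|` B|%:R : R))^-1)%:C
    * expi (dotr (QT *m intmx R (val l)) (intmx R (val b))) * alpha l) ->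
  orthogonal_columns (#|` B|%:R : R)%:C digit_matrix.
Proof.
set N := #|` B|%:R : R; set s := (Num.sqrt N)^-1 => B_gt0 orthonormal.
have sN : N%:C * (s%:C * s%:C) = 1.
  by rewrite -!rmorphM -expr2 exprVn sqr_sqrtr ?ler0n // mulfV ?pnatr_eq0 -?lt0n.
have sJ : Num.conj (s%:C) = s%:C.
  by rewrite conj_Creal // ger0_real // ler0c invr_ge0 sqrtr_ge0.
move=> b b'; rewrite -[(b == b')%:R]mul1r -orthonormal mulr_sumr.
apply: eq_bigr => l _.
by rewrite /digit_matrix !rmorphM /= sJ -[LHS]mulr1 -sN; ring.
Qed.

Lemma tuple_atom_rcons k (bs : k.-tuple B) (b : B) :
  tuple_atom (rcons_tuple bs b) = Q *m (tuple_atom bs + intmx R (val b)).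
Proof.
have iterQ_add j (u v : 'cV[R]_d) :
    iter j (mulmx Q) (u + v) = iter j (mulmx Q) u + iter j (mulmx Q) v.
  by elim: j => //= j ->; rewrite mulmxDr.
have iterQK (v : 'cV[R]_d) : iter k (mulmx Q) (iter k (mulmx (intmx R M)) v) = v.
  by elim: k {bs} => // j IHj; rewrite iterSr /= mulKmx.
rewrite /tuple_atom /nu_atom radix_sum_rcons intmxD iterQ_add intmx_iter !iterS.
by rewrite iterQK -mulmxDr.
Qed.

Lemma dotr_invmx (u v : 'cV[R]_d) : dotr u (Q *m v) = dotr (QT *m u) v.
Proof. by rewrite /dotr trmx_mul intmxT -trmx_inv trmxK mulmxA. Qed.

Lemma dotr_radix_step (u w c : 'cV[int]_d) (x : 'cV[R]_d) :
  dotr (intmx R (u + M^T *m w)) (Q *m (x + intmx R c)) =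
  dotr (QT *m intmx R u) x + dotr (QT *m intmx R u) (intmx R c)
  + dotr (intmx R w) x + ((w^T *m c) 0 0)%:~R.
Proof.
rewrite intmxD dotrDl dotr_invmx dotrDr -[RHS]addrA; congr (_ + _).
rewrite /dotr intmxM intmxT trmx_mul trmxK -mulmxA (mulmxA (intmx R M)).
by rewrite (mulmxV M_unit) mul1mx mulmxDr mxE -intmxT -intmxM [in X in _ + X]mxE.
Qed.

Lemma frame_matrix_cons_rcons k (l : L) (ls : k.-tuple L) (b : B) (bs : k.-tuple B) :
  frame_matrix (cons_tuple l ls) (rcons_tuple bs b) =
  expi (dotr (QT *m intmx R (val l)) (tuple_atom bs)) * digit_matrix l b
  * frame_matrix ls bs.
Proof.
rewrite /frame_matrix /frame_fun radix_sum_cons tuple_atom_rcons dotr_radix_step.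
rewrite !expiD expi_int mulr1 big_ord_recl /digit_matrix.
under [\prod_(j < k) _]eq_bigr => j _ do rewrite tnthS.
by rewrite [tnth _ ord0]/=; ring.
Qed.

Lemma frame_matrix_orthogonal_columns n :
  orthogonal_columns n digit_matrix ->
  forall k, orthogonal_columns (n ^+ k) (@frame_matrix k).
Proof.
move=> o_digit; elim=> [|k IHk].
  move=> bs bs'; rewrite (tuple0 bs) (tuple0 bs') eqxx mulr1.
  rewrite (eq_bigr (fun _ => 1)) ?sumr_const ?card_tuple //.
  move=> ls _; rewrite /frame_matrix /frame_fun big_ord0 /radix_sum big_ord0.
  by rewrite /dotr /intmx map_mx0 trmx0 mul0mx mxE expi0 !mulr1 mul1r conjC1.
apply: (orthogonal_columns_bij (G := @frame_matrix k.+1) (cons_tuple_bij L k)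
  (rcons_tuple_bij B k)).
have -> : (fun (p : L * k.-tuple L) (q : B * k.-tuple B) =>
            frame_matrix (cons_tuple p.1 p.2) (rcons_tuple q.2 q.1))
        = (fun p q => expi (dotr (QT *m intmx R (val p.1)) (tuple_atom q.2))
                      * digit_matrix p.1 q.1 * frame_matrix p.2 q.2).
  by apply/funext => p; apply/funext => q; rewrite frame_matrix_cons_rcons.
rewrite exprS; apply: (orthogonal_columns_twisted_prod
  (u := fun l bs => expi (dotr (QT *m intmx R (val l)) (tuple_atom bs)))) o_digit IHk.
by move=> l bs; apply: expi_unit.
Qed.

End FrameMatrix.

Theorem proposition3p7 (R : realType) (d : nat) (M : 'M[int]_d)
  (B L : {fset 'cV[int]_d}) (alpha : L -> R[i]) :
  expansive R M ->
  (0 : 'cV[int]_d) \in B ->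
  (0 : 'cV[int]_d) \in L ->
  (* the matrix (N^{-1/2} e^{2 pi i (R^T)^{-1} l . b} alpha_l)_{l in L, b in B}
     has orthonormal columns *)
  (forall b b' : B,
     \sum_(l : L)
       ((Num.sqrt (#|` B|%:R : R))^-1)%:C
         * expi (dotr (invmx (intmx R M^T) *m intmx R (val l)) (intmx R (val b)))
         * alpha l
       * (((Num.sqrt (#|` B|%:R : R))^-1)%:C
         * expi (dotr (invmx (intmx R M^T) *m intmx R (val l)) (intmx R (val b')))
         * alpha l)^*
     = (b == b')%:R) ->
  forall (k : nat) (f : 'cV[R]_d -> R[i]),
    \sum_(ls : k.-tuple L) `| nu_inner k M B f (frame_fun M alpha ls) | ^+ 2
    = nu_inner k M B f f.
Proof.
move=> expM B0 _ orthonormal k f.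
have M_unit := expansive_unitmx expM.
have B_gt0 : (0 < #|` B|)%N by rewrite cardfs_gt0; apply/fset0Pn; exists 0.
have o_digit : orthogonal_columns (#|` B|%:R : R)%:C (digit_matrix M (B := B) alpha).
  by apply: digit_matrix_orthogonal_columns B_gt0 _ => b b'; rewrite mul1r orthonormal.
have o_frame := frame_matrix_orthogonal_columns M_unit o_digit (k := k).
rewrite /nu_inner; under eq_bigr => ls _ do rewrite normrM exprMn.
rewrite -mulr_sumr (parseval_of_orthogonal_columns _ o_frame).
rewrite rmorph_nat normfV normrX normr_nat mulrA; congr (_ * _).
by rewrite expr2 -mulrA mulVf ?mulr1 // expf_neq0 // pnatr_eq0 -lt0n.
Qed.
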